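(* There is an absolute constant $K>0$ such that the following holds. Let $n\ge1$, $k=\lfloor\sqrt n\rfloor$, and let $M_n$ be the $\binom{n}{k}\times n$ matrix whose rows are all distinct $0/1$ vectors of length $n$ with exactly $k$ ones. Let $R$ be a row player's payoff matrix (entries in $[0,1]$) that contains $M_n$ as a submatrix (on some set $S$ of rows and some set $T$ of columns), such that every row of $R$ not in $S$ is identically $0$, and for every row in $S$, every entry in a column not in $T$ equals $1$. Let $p,p_r,p_c\in[0,1]$. Then for every mixed strategy $\mathbf{x}$ of the row player allocating probability at least $p_r$ to rows not in $S$, there exists a column $\ell\in T$ such that for every mixed strategy $\mathbf{y}$ of the column player that allocates probability at least $p_c$ to columns not in $T$ and probability $p$ to column $\ell$, the row player's regret $\max_i\mathbf{e}_i^TR\mathbf{y}-\mathbf{x}^TR\mathbf{y}$ is at least $p-K/\sqrt n+p_rp_c$.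
   Context: Mixed strategies are probability vectors over rows/columns; $\mathbf{e}_i$ is the $i$-th unit vector; the row player's payoff is $\mathbf{x}^TR\mathbf{y}$ and his regret is the payoff of his best response to $\mathbf{y}$ minus $\mathbf{x}^TR\mathbf{y}$. *)

From Stdlib Require Import Reals.
From HB Require Import structures.
From mathcomp Require Import all_boot all_order all_algebra.
From mathcomp Require Import Rstruct.
Set Implicit Arguments. Unset Strict Implicit. Unset Printing Implicit Defensive.
Import Order.TTheory GRing.Theory Num.Theory.
Local Open Scope ring_scope.

Definition ksqrt (n : nat) : nat := Nat.sqrt n.

(* M is "M_n": a 'C(n,k) x n matrix whose rows are pairwise distinct
   0/1 vectors with exactly k ones (so, by counting, all of them). *)
Definition is_Mn (n : nat) (M : 'M[R]_('C(n, ksqrt n), n)) : Prop :=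
  [/\ (forall a j, M a j = 0 \/ M a j = 1),
      (forall a, #|[set j | M a j == 1]| = ksqrt n) &
      (forall a b, row a M = row b M -> a = b)].

Definition mixed (m : nat) (x : 'I_m -> R) : Prop :=
  (forall i, 0 <= x i) /\ \sum_i x i = 1.

Definition payoff (m N : nat) (A : 'M[R]_(m, N)) (x : 'I_m -> R) (y : 'I_N -> R) : R :=
  \sum_i \sum_j x i * A i j * y j.

Definition pure_payoff (m N : nat) (A : 'M[R]_(m, N)) (i : 'I_m) (y : 'I_N -> R) : R :=
  \sum_j A i j * y j.

(* max_i e_i^T R y.  The neutral element 0 is harmless here: all payoff
   entries lie in [0,1] and strategies are nonnegative, and m >= 1. *)
Definition best_payoff (m N : nat) (A : 'M[R]_(m, N)) (y : 'I_N -> R) : R :=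
  \big[Num.max/0]_i pure_payoff A i y.

Definition regret (m N : nat) (A : 'M[R]_(m, N)) (x : 'I_m -> R) (y : 'I_N -> R) : R :=
  best_payoff A y - payoff A x y.

(* Let w_b be the x-weight of column b of M_n.  Every row of M_n has k ones,
   so some column l has w_l <= k/n <= 1/sqrt n; this is the column chosen.
   Against any y putting mass p on l, each row a of M_n is beaten, up to 1/k,
   by the row obtained from a by trading its cheapest column (worth at most
   1/k under y) for l, which gains p whenever a misses l.  Averaging over x,
   the rows of M_n lose p (1 - w_l) - 1/k and the zero rows outside S lose
   p + y(outside T) - 1/k.  As 1/k <= 2/sqrt n, K = 3 works. *)
From Stdlib Require Import Reals.
From HB Require Import structures.
From mathcomp Require Import all_boot all_order all_algebra.
From mathcomp Require Import Rstruct.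
From mathcomp Require Import lra zify.
Set Implicit Arguments. Unset Strict Implicit. Unset Printing Implicit Defensive.
Import Order.TTheory GRing.Theory Num.Theory.
Local Open Scope ring_scope.

Lemma exists_le_mean (I : finType) (P : {pred I}) (f : I -> R) (i0 : I) :
  P i0 -> exists2 i, P i & #|P|%:R * f i <= \sum_(j in P) f j.
Proof.
move=> Pi0; case: (arg_minP f Pi0) => i Pi f_min; exists i => //.
by rewrite mulr_natl -sumr_const; apply: ler_sum => j Pj; apply: f_min.
Qed.

Lemma sum_in_le_sum (I : finType) (B : {set I}) (f : I -> R) :
  (forall i, 0 <= f i) -> \sum_(i in B) f i <= \sum_i f i.
Proof.
by move=> f_ge0; rewrite [X in _ <= X](bigID (mem B)) /= lerDl sumr_ge0.
Qed.

(* Exchanging the cheapest element of B for l loses at most the mean 1/#|B|. *)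
Lemma exists_swap_in (I : finType) (z : I -> R) (B : {set I}) (l : I) :
  (0 < #|B|)%N -> \sum_(b in B) z b <= 1 ->
  exists2 B' : {set I}, #|B'| = #|B| &
    \sum_(b in B) z b + (l \notin B)%:R * z l - (#|B|%:R)^-1
      <= \sum_(b in B') z b.
Proof.
move=> B_gt0 zB_le1.
have inv_ge0 : 0 <= (#|B|%:R : R)^-1 by rewrite invr_ge0 ler0n.
have [lB | lNB] := boolP (l \in B).
  by exists B => //; rewrite mul0r addr0 lerBlDr lerDl.
have [c0 c0B] := card_gt0P B_gt0.
have [c cB zc_min] := @exists_le_mean _ (mem B) z c0 c0B.
have {}cB : c \in B := cB.
have zc_le : z c <= (#|B|%:R)^-1.
  by rewrite -[_^-1]mulr1 ler_pdivlMl ?ltr0n //; apply: le_trans zc_min _.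
have lNBc : l \notin B :\ c by rewrite in_setD1 (negbTE lNB) andbF.
exists (l |: (B :\ c)).
  by rewrite cardsU1 lNBc (cardsD1 c B) cB.
by rewrite big_setU1 //= (big_setD1 c cB) /= mul1r; lra.
Qed.

Definition row_ones (p n : nat) (M : 'M[R]_(p, n)) (a : 'I_p) : {set 'I_n} :=
  [set j | M a j == 1].

Section ZeroOneMatrix.

Variables (p n : nat) (M : 'M[R]_(p, n)).
Hypothesis M01 : forall a j, M a j = 0 \/ M a j = 1.

Lemma mx01_row_ones a j : M a j = (j \in row_ones M a)%:R.
Proof. by rewrite inE; case: (M01 a j) => ->; rewrite ?eqxx // eq_sym oner_eq0. Qed.

Lemma sum_mx01_row (a : 'I_p) (f : 'I_n -> R) :
  \sum_j M a j * f j = \sum_(j in row_ones M a) f j.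
Proof.
rewrite [RHS]big_mkcond; apply: eq_bigr => j _.
by rewrite mx01_row_ones; case: (j \in _); rewrite ?mul1r ?mul0r.
Qed.

Variable k : nat.
Hypothesis row_card : forall a, #|row_ones M a| = k.

Lemma sum_col_weights (u : 'I_p -> R) :
  \sum_j \sum_a u a * M a j = k%:R * \sum_a u a.
Proof.
rewrite exchange_big mulr_sumr; apply: eq_bigr => a _ /=.
rewrite -mulr_sumr mulrC; congr (_ * _).
rewrite -(eq_bigr _ (fun j _ => mulr1 (M a j))) sum_mx01_row sumr_const.
by rewrite row_card.
Qed.

Lemma exists_light_column (u : 'I_p -> R) : (0 < n)%N ->
  exists l : 'I_n, n%:R * \sum_a u a * M a l <= k%:R * \sum_a u a.
Proof.
move=> n_gt0; rewrite -sum_col_weights.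
have [l _ hl] := @exists_le_mean _ predT (fun j => \sum_a u a * M a j) (Ordinal n_gt0) erefl.
by exists l; move: hl; rewrite card_ord; congr (_ <= _); apply: eq_bigl.
Qed.

End ZeroOneMatrix.

Lemma Mn_row_ones_surj n (M : 'M[R]_('C(n, ksqrt n), n)) : is_Mn M ->
  forall B : {set 'I_n}, #|B| = ksqrt n -> exists a, row_ones M a = B.
Proof.
case=> M01 row_card row_inj B cardB.
have ones_inj : injective (row_ones M).
  move=> a b /setP eq_ab; apply: row_inj; apply/rowP => j; rewrite !mxE.
  by rewrite !mx01_row_ones // eq_ab.
have ones_onto : row_ones M @: setT = [set A : {set 'I_n} | #|A| == ksqrt n].
  apply/eqP; rewrite eqEcard card_draws card_ord card_imset // cardsT card_ord leqnn andbT.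
  by apply/subsetP => _ /imsetP [a _ ->]; rewrite inE row_card.
have : B \in row_ones M @: setT by rewrite ones_onto inE cardB.
by case/imsetP => a _ ->; exists a.
Qed.

Lemma ksqrt_spec n : (ksqrt n * ksqrt n <= n < (ksqrt n).+1 * (ksqrt n).+1)%N.
Proof.
have [lo hi] := Nat.sqrt_spec n (Nat.le_0_l n).
by rewrite /ksqrt; apply/andP; split; lia.
Qed.

Lemma ksqrt_gt0 n : (0 < n)%N -> (0 < ksqrt n)%N.
Proof. by move=> n_gt0; have := ksqrt_spec n; nia. Qed.

Section SqrtBounds.

Variable n : nat.
Hypothesis n_gt0 : (0 < n)%N.

Let s := Num.sqrt (n%:R : R).
Let k : R := (ksqrt n)%:R.

Let s_gt0 : 0 < s. Proof. by rewrite sqrtr_gt0 ltr0n. Qed.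
Let s_sq : s * s = n%:R. Proof. by rewrite -expr2 sqr_sqrtr // ler0n. Qed.
Let k_ge1 : 1 <= k. Proof. by rewrite ler1n ksqrt_gt0. Qed.

Let k_sq_bounds : k * k <= n%:R < (k + 1) * (k + 1).
Proof. by have /andP [lo hi] := ksqrt_spec n; rewrite -natrM ler_nat natr1 -natrM ltr_nat lo. Qed.

Lemma ksqrt_le_sqrt : k <= s.
Proof. by have := s_gt0; have := s_sq; have := k_ge1; have /andP [? ?] := k_sq_bounds; nra. Qed.

Lemma sqrt_le_2ksqrt : s <= 2 * k.
Proof. by have := s_gt0; have := s_sq; have := k_ge1; have /andP [? ?] := k_sq_bounds; nra. Qed.

Lemma ksqrt_div_le : k / n%:R <= s^-1.
Proof.
rewrite -s_sq ler_pdivrMr ?mulr_gt0 //.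
by rewrite mulrA mulVf ?gt_eqF // mul1r ksqrt_le_sqrt.
Qed.

Lemma inv_ksqrt_le : k^-1 <= 2 / s.
Proof.
rewrite ler_pdivlMr // mulrC ler_pdivrMr; last by have := k_ge1; lra.
exact: sqrt_le_2ksqrt.
Qed.

End SqrtBounds.

Section RegretAgainstColumn.

Variables (n m N : nat) (A : 'M[R]_(m, N)) (S : {set 'I_m}) (T : {set 'I_N}).
Variables (M : 'M[R]_('C(n, ksqrt n), n)) (rho : 'I_('C(n, ksqrt n)) -> 'I_m).
Variable sigma : 'I_n -> 'I_N.
Hypotheses (MMn : is_Mn M) (rho_inj : injective rho) (sigma_inj : injective sigma).
Hypotheses (S_def : S = rho @: setT) (T_def : T = sigma @: setT).
Hypothesis A_sub : forall a b, A (rho a) (sigma b) = M a b.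
Hypothesis A_out_rows : forall i j, i \notin S -> A i j = 0.
Hypothesis A_out_cols : forall i j, i \in S -> j \notin T -> A i j = 1.

Hypothesis n_gt0 : (0 < n)%N.

Variable y : 'I_N -> R.
Hypothesis y_mixed : mixed y.

Local Notation k := (ksqrt n).
Local Notation y_out := (\sum_(j | j \notin T) y j).

Lemma sum_rows_split (f : 'I_m -> R) :
  \sum_i f i = \sum_a f (rho a) + \sum_(i | i \notin S) f i.
Proof.
rewrite (bigID (mem S)) /= S_def big_imset /=; last exact: in2W.
by congr (_ + _); apply: eq_bigl => a; rewrite in_setT.
Qed.

Lemma sum_cols_split (f : 'I_N -> R) :
  \sum_j f j = \sum_b f (sigma b) + \sum_(j | j \notin T) f j.
Proof.
rewrite (bigID (mem T)) /= T_def big_imset /=; last exact: in2W.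
by congr (_ + _); apply: eq_bigl => b; rewrite in_setT.
Qed.

Lemma pure_payoff_out i : i \notin S -> pure_payoff A i y = 0.
Proof. by move=> iNS; apply: big1 => j _; rewrite A_out_rows // mul0r. Qed.

Lemma pure_payoff_row a :
  pure_payoff A (rho a) y = \sum_b M a b * y (sigma b) + y_out.
Proof.
rewrite /pure_payoff sum_cols_split; congr (_ + _).
  by apply: eq_bigr => b _; rewrite A_sub.
by apply: eq_bigr => j jNT; rewrite A_out_cols ?mul1r // S_def imset_f.
Qed.

Lemma payoff_rows x :
  payoff A x y = \sum_a x (rho a) * pure_payoff A (rho a) y.
Proof.
have -> : payoff A x y = \sum_i x i * pure_payoff A i y.
  by apply: eq_bigr => i _; rewrite mulr_sumr; apply: eq_bigr => j _; rewrite mulrA.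
by rewrite sum_rows_split [X in _ + X]big1 ?addr0 // => i /pure_payoff_out ->; rewrite mulr0.
Qed.

Lemma pure_le_best_payoff i : pure_payoff A i y <= best_payoff A y.
Proof. exact: le_bigmax. Qed.

Lemma best_payoff_ge_row_ones (B : {set 'I_n}) : #|B| = k ->
  \sum_(b in B) y (sigma b) + y_out <= best_payoff A y.
Proof.
case: MMn => M01 _ _ /(Mn_row_ones_surj MMn) [a <-].
by rewrite -sum_mx01_row // -pure_payoff_row pure_le_best_payoff.
Qed.

Lemma best_payoff_ge_swap a l :
  pure_payoff A (rho a) y + (1 - M a l) * y (sigma l) - (k%:R)^-1
    <= best_payoff A y.
Proof.
case: y_mixed MMn => y_ge0 y_sum1 [M01 row_card _].
have col_mass_le1 : \sum_(b in row_ones M a) y (sigma b) <= 1.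
  apply: le_trans (sum_in_le_sum _ (fun b => y_ge0 (sigma b))) _.
  by rewrite -y_sum1 (sum_cols_split y) lerDl sumr_ge0.
have ones_gt0 : (0 < #|row_ones M a|)%N by rewrite row_card ksqrt_gt0.
have [B' cardB' swap_ge] := exists_swap_in l ones_gt0 col_mass_le1.
rewrite row_card in cardB' swap_ge.
apply: le_trans (best_payoff_ge_row_ones cardB').
rewrite pure_payoff_row sum_mx01_row // mx01_row_ones //.
by case: (l \in _) swap_ge => /=; lra.
Qed.

Lemma best_payoff_ge_column l :
  y (sigma l) + y_out - (k%:R)^-1 <= best_payoff A y.
Proof.
have [y_ge0 _] := y_mixed; have [M01 _ _] := MMn.
have a0 : 'I_('C(n, k)).
  by exists 0%N; rewrite bin_gt0; have := Nat.sqrt_le_lin n; rewrite /ksqrt; lia.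
have mass_l : M a0 l * y (sigma l) <= \sum_b M a0 b * y (sigma b).
  rewrite (bigD1 l) //= lerDl sumr_ge0 // => b _.
  by rewrite mulr_ge0 ?y_ge0 // mx01_row_ones.
by have := best_payoff_ge_swap a0 l; rewrite pure_payoff_row; lra.
Qed.

Lemma regret_ge_column x l : mixed x ->
  y (sigma l) * (1 - \sum_a x (rho a) * M a l) - (k%:R)^-1
    + (\sum_(i | i \notin S) x i) * y_out <= regret A x y.
Proof.
case=> x_ge0 x_sum1.
set p := y (sigma l); set x_out := \sum_(i | i \notin S) x i.
have x_split : \sum_a x (rho a) + x_out = 1 by rewrite -x_sum1 sum_rows_split.
have rows_S : \sum_a x (rho a) * pure_payoff A (rho a) y
    + p * \sum_a x (rho a) - p * \sum_a x (rho a) * M a l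
    - (k%:R)^-1 * \sum_a x (rho a) <= (\sum_a x (rho a)) * best_payoff A y.
  rewrite mulr_suml !mulr_sumr -big_split -!sumrB; apply: ler_sum => a _ /=.
  by have := ler_wpM2l (x_ge0 (rho a)) (best_payoff_ge_swap a l); rewrite -/p; lra.
have rows_out : x_out * (p + y_out - (k%:R)^-1) <= x_out * best_payoff A y.
  by apply: ler_wpM2l (best_payoff_ge_column l); apply: sumr_ge0.
have unit_mass t : (\sum_a x (rho a) + x_out) * t = t by rewrite x_split mul1r.
have := unit_mass (best_payoff A y); have := unit_mass p; have := unit_mass (k%:R)^-1.
by rewrite /regret payoff_rows lerBrDr; lra.
Qed.

End RegretAgainstColumn.

Theorem corollary1 :
  exists K : R, 0 < K /\
  forall (n : nat), (1 <= n)%N ->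
  forall (m N : nat) (A : 'M[R]_(m, N)) (S : {set 'I_m}) (T : {set 'I_N})
         (M : 'M[R]_('C(n, ksqrt n), n))
         (rho : 'I_('C(n, ksqrt n)) -> 'I_m) (sigma : 'I_n -> 'I_N),
    is_Mn M ->
    injective rho -> injective sigma ->
    S = rho @: setT -> T = sigma @: setT ->
    (forall a b, A (rho a) (sigma b) = M a b) ->
    (forall i j, 0 <= A i j <= 1) ->
    (forall i j, i \notin S -> A i j = 0) ->
    (forall i j, i \in S -> j \notin T -> A i j = 1) ->
  forall p pr pc : R, 0 <= p <= 1 -> 0 <= pr <= 1 -> 0 <= pc <= 1 ->
  forall x : 'I_m -> R, mixed x -> pr <= \sum_(i | i \notin S) x i ->
  exists2 l : 'I_N, l \in T &
    forall y : 'I_N -> R, mixed y -> pc <= \sum_(j | j \notin T) y j -> y l = p ->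
      p - K / Num.sqrt (n%:R) + pr * pc <= regret A x y.
Proof.
exists 3; split; first lra.
move=> n n_gt0 m N A S T M rho sigma MMn rho_inj sigma_inj S_def T_def A_sub _
  A_out_rows A_out_cols p pr pc /andP [p_ge0 p_le1] /andP [pr_ge0 _] /andP [pc_ge0 _]
  x x_mixed pr_le.
have [[x_ge0 x_sum1] [M01 row_card _]] := (x_mixed, MMn).
have [l l_light] := exists_light_column M01 row_card (fun a => x (rho a)) n_gt0.
exists (sigma l); first by rewrite T_def imset_f.
move=> y y_mixed pc_le y_l.
have := regret_ge_column MMn rho_inj sigma_inj S_def T_def A_sub A_out_rows
  A_out_cols n_gt0 y_mixed l x_mixed.
rewrite y_l; set w := \sum_a x (rho a) * M a l.
have w_ge0 : 0 <= w by apply: sumr_ge0 => a _; rewrite mulr_ge0 // mx01_row_ones.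
have w_le : w <= (ksqrt n)%:R / n%:R.
  rewrite ler_pdivlMr ?ltr0n // mulrC; apply: le_trans l_light _.
  apply: ler_piMr; first exact: ler0n.
  have := sum_rows_split rho_inj S_def x; rewrite x_sum1.
  have : 0 <= \sum_(i | i \notin S) x i by apply: sumr_ge0.
  lra.
have := ksqrt_div_le n_gt0; have := inv_ksqrt_le n_gt0.
have : pr * pc <= (\sum_(i | i \notin S) x i) * \sum_(j | j \notin T) y j.
  by apply: ler_pM.
have : p * w <= w by rewrite ler_piMl.
lra.
Qed.
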